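(* Let $E$ be a countable set, $\mathcal{C}=\langle E,X\rangle$ a rooted configuration structure and $x^\dagger\in X$ a finite configuration. For all finite $y,z\in X$, we have $y\odot\mathcal{C}[x^\dagger]=z\odot\mathcal{C}[x^\dagger]$ if and only if $y=z$.
   Context: A configuration structure over $E$ is a pair $\mathcal{C}=\langle E,X\rangle$ with $X\subseteq\mathcal{P}(E)$ (its configurations); rooted means $\emptyset\in X$. For finite $y\in X$ the symmetric residual is $y\odot\mathcal{C}:=\langle E,\{w\mathbin{\triangle}y\mid w\in X\}\rangle$, $\mathbin{\triangle}$ being symmetric difference. A pointed configuration structure $\mathcal{C}[x^\dagger]$ is a pair $\langle\mathcal{C},x^\dagger\rangle$ with $x^\dagger$ a finite configuration of $\mathcal{C}$ (its referential); two pointed structures are equal when both components are equal. For finite $y\in X$, $y\odot\mathcal{C}[x^\dagger]:=(y\odot\mathcal{C})[y\mathbin{\triangle}x^\dagger]$. *)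

From mathcomp Require Import all_boot.
From mathcomp Require Import boolp classical_sets cardinality.
Set Implicit Arguments. Unset Strict Implicit. Unset Printing Implicit Defensive.
Local Open Scope classical_set_scope.

Record config_structure (E : Type) := ConfStruct { confs : set (set E) }.

Definition rooted (E : Type) (C : config_structure E) : Prop := confs C set0.

Definition symdiff (E : Type) (A B : set E) : set E := (A `\` B) `|` (B `\` A).

Definition sym_residual (E : Type) (y : set E) (C : config_structure E)
  : config_structure E :=
  ConfStruct [set symdiff w y | w in confs C].

Definition pointed (E : Type) := (config_structure E * set E)%type.

Definition pointed_residual (E : Type) (y : set E) (P : pointed E) : pointed E :=
  (sym_residual y P.1, symdiff y P.2).

From mathcomp Require Import all_boot.
From mathcomp Require Import boolp classical_sets cardinality.
Set Implicit Arguments.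
Local Open Scope classical_set_scope.

(* Already the referentials y △ x† and z △ x† determine y and z, because
   [_ △ x†] is an involution. *)

Lemma symdiffK (E : Type) (A B : set E) : symdiff (symdiff A B) B = A.
Proof.
apply/funext => e; apply/propext; rewrite /symdiff /=.
by have [] := pselect (A e); have [] := pselect (B e); tauto.
Qed.

Lemma symdiffIr (E : Type) (B : set E) : injective (fun A : set E => symdiff A B).
Proof. by move=> A1 A2 eqA; rewrite -(symdiffK A1 B) eqA symdiffK. Qed.

Theorem mainTheorem4 (E : Type) (hE : countable [set: E])
  (C : config_structure E) (hroot : rooted C)
  (xd : set E) (hxd : confs C xd) (hxdfin : finite_set xd)
  (y z : set E) (hy : confs C y) (hyfin : finite_set y)
  (hz : confs C z) (hzfin : finite_set z) :
  pointed_residual y (C, xd) = pointed_residual z (C, xd) <-> y = z.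
Proof.
split; last by move=> ->.
by case=> _ /symdiffIr.
Qed.
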